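(* Let $A$ be a finite set with $N\ge 2$ elements and let $(v_{xy})$ be a Llull matrix on $A$ with CLC structure that is not identically zero. Let $\rho_x=\frac{1}{N-1}\sum_{y\neq x}v_{xy}$ be its mean preference scores and $(\varphi_x)_{x\in A}$ its strengths. Then for all $x,y\in A$: (a) if $\varphi_x>\varphi_y$ then $\rho_x>\rho_y$; (b) if $\rho_x>\rho_y$ then either $\varphi_x>\varphi_y$ or $\varphi_x=\varphi_y=0$.
   Context: A Llull matrix on a finite set $A$ is an assignment to each ordered pair of distinct elements $x\neq y$ of $A$ of a number $v_{xy}\in[0,1]$ such that $v_{xy}+v_{yx}\le 1$. Turnouts: $t_{xy}=v_{xy}+v_{yx}$; margins: $m_{xy}=v_{xy}-v_{yx}$. The matrix has CLC structure if there is a total order $\xi$ on $A$ such that, writing $x<_\xi y$ when $x$ precedes $y$ and $x'$ for the immediate successor of $x$ in $\xi$ (when it exists): (i) $v_{xy}\ge v_{yx}$ whenever $x<_\xi y$; (ii) $v_{xz}=\max(v_{xy},v_{yz})$ whenever $x<_\xi y<_\xi z$; (iii) $v_{zx}=\min(v_{zy},v_{yx})$ whenever $x<_\xi y<_\xi z$; (iv) $0\le t_{xz}-t_{x'z}\le m_{xx'}$ whenever $x'$ exists and $z\notin\{x,x'\}$. Strengths (Zermelo's method): let $\Phi=\{\varphi\in\mathbb{R}^A:\varphi_x>0\ \forall x,\ \sum_x\varphi_x=1\}$ and $F(\varphi)=\prod_{\{x,y\}}\frac{\varphi_x^{v_{xy}}\varphi_y^{v_{yx}}}{(\varphi_x+\varphi_y)^{t_{xy}}}$,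 the product over unordered pairs of distinct elements of $A$. A maximizing sequence is a sequence $\varphi^n\in\Phi$ with $F(\varphi^n)\to\sup_\Phi F$. When the matrix has a top dominant irreducible component (which is the case for non-vanishing Llull matrices with CLC structure), there is a unique $\varphi$ in the closure $\overline{\Phi}$ such that every maximizing sequence converges to $\varphi$; this $\varphi$ is the vector of strengths. (Here irreducible components are the classes of $x\sim y$ iff $x=y$ or both indirect scores $\hat v_{xy},\hat v_{yx}$ are positive, where $\hat v_{xy}$ is the maximum over paths $x=x_0,\dots,x_n=y$ of $\min_i v_{x_ix_{i+1}}$; $x$ dominates $y$ iff $\hat v_{xy}>0=\hat v_{yx}$; a top dominant component dominates all other components.) *)

From mathcomp Require Import all_boot all_order all_algebra.
From mathcomp Require Import all_classical all_reals all_analysis.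
Set Implicit Arguments. Unset Strict Implicit. Unset Printing Implicit Defensive.
Import Order.TTheory GRing.Theory Num.Theory.
Local Open Scope classical_set_scope.
Local Open Scope ring_scope.

Section Llull.
Variables (R : realType) (A : finType).

(* A matrix is a function v : A -> A -> R; diagonal entries are irrelevant. *)
Definition llull (v : A -> A -> R) : Prop :=
  forall x y, x != y -> 0 <= v x y /\ v x y <= 1 /\ v x y + v y x <= 1.

Definition turnout (v : A -> A -> R) x y := v x y + v y x.
Definition margin (v : A -> A -> R) x y := v x y - v y x.

(* The total order xi is given by a ranking rk : A -> 'I_#|A| that is
   injective (hence bijective); x <_xi y iff rk x < rk y, and x' is the
   immediate successor of x iff rk x' = (rk x).+1. *)
Definition clc_order (v : A -> A -> R) (rk : A -> 'I_#|A|) : Prop :=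
  injective rk /\
  (forall x y, (rk x < rk y)%N -> v y x <= v x y) /\
  (forall x y z, (rk x < rk y)%N -> (rk y < rk z)%N ->
      v x z = Num.max (v x y) (v y z)) /\
  (forall x y z, (rk x < rk y)%N -> (rk y < rk z)%N ->
      v z x = Num.min (v z y) (v y x)) /\
  (forall x x' z, nat_of_ord (rk x') = (rk x).+1 -> z != x -> z != x' ->
      0 <= turnout v x z - turnout v x' z /\
      turnout v x z - turnout v x' z <= margin v x x').

Definition has_CLC (v : A -> A -> R) : Prop := exists rk, clc_order v rk.

Definition nonvanishing (v : A -> A -> R) : Prop :=
  exists x y, x != y /\ v x y != 0.

Definition rho (v : A -> A -> R) (x : A) : R :=
  (#|A|.-1%:R)^-1 * \sum_(y | y != x) v x y.

Definition Phi : set (A -> R) :=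
  [set phi | (forall x, 0 < phi x) /\ \sum_x phi x = 1].

(* Zermelo's objective, as a product over unordered pairs {x,y}
   (each unordered pair is enumerated once via enum_rank). *)
Definition Fz (v : A -> A -> R) (phi : A -> R) : R :=
  \prod_(x : A) \prod_(y : A | (enum_rank x < enum_rank y)%N)
     ((phi x `^ v x y) * (phi y `^ v y x) / ((phi x + phi y) `^ turnout v x y)).

Definition maximizing_seq (v : A -> A -> R) (phis : nat -> A -> R) : Prop :=
  (forall n, Phi (phis n)) /\
  (Fz v (phis n) @[n --> \oo] --> (sup [set Fz v phi | phi in Phi] : R^o)).

Definition strengths (v : A -> A -> R) (phi : A -> R) : Prop :=
  forall phis, maximizing_seq v phis ->
    forall x, phis n x @[n --> \oo] --> (phi x : R^o).

End Llull.

From mathcomp Require Import all_boot all_order all_algebra.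
From mathcomp Require Import all_classical all_reals all_analysis.
From mathcomp Require Import ring lra perm.
Import Order.TTheory GRing.Theory Num.Theory.
Local Open Scope classical_set_scope.
Local Open Scope ring_scope.
Set Implicit Arguments. Unset Strict Implicit. Unset Printing Implicit Defensive.

(* Strengths maximise [loglik] = 2 ln F.  Let a' be the successor of a in the
   CLC order.  The CLC conditions make two perturbations of a positive vector p
   non-decreasing for [loglik]: exchanging p a and p a' when p a < p a', and,
   when rho a > rho a', multiplying p a by a fixed mu > 1 and dividing p a' by
   mu, as long as p a <= mu p a'.  Applied termwise to a maximizing sequence,
   each gives another maximizing sequence, whose limit is again the vector of
   strengths.  Hence phi a' <= phi a; phi a = phi a' when rho a = rho a' (a and
   a' are then interchangeable); and if rho a > rho a' and phi a = phi a' > 0,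
   the shifted sequence would force phi a / phi a' = mu^2.  Since rho is
   non-increasing along the order, these facts about consecutive elements chain
   to the theorem. *)

Section LnInequalities.
Variable R : realType.
Implicit Types x y w : R.

Lemma ln_le_subr1 x : 0 < x -> ln x <= x - 1.
Proof.
move=> x0; have := @le_ln1Dx R (x - 1).
have -> : 1 + (x - 1) = x by ring.
apply; lra.
Qed.

Lemma ln_ge1BV x : 0 < x -> 1 - x^-1 <= ln x.
Proof.
move=> x0; have := @ln_le_subr1 x^-1; rewrite invr_gt0 => /(_ x0).
rewrite lnV ?posrE //; lra.
Qed.

Lemma ln_ratio_le x y : 0 < x -> 0 < y -> ln y - ln x <= Num.max 0 (y / x - 1).
Proof.
move=> x0 y0; rewrite -ln_div ?posrE // le_max; apply/orP; right.
by apply: ln_le_subr1; rewrite divr_gt0.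
Qed.

Lemma ln_shift_bounds x y w : 0 < x -> x <= y -> 0 < w ->
  0 <= ln (y + w) - ln (x + w) <= ln y - ln x.
Proof.
move=> x0 xy w0; have y0 : 0 < y by apply: lt_le_trans xy.
apply/andP; split; first by rewrite subr_ge0 ler_ln ?posrE ?addr_gt0 // lerD2r.
rewrite lerBlDr addrAC lerBrDr -!lnM ?posrE ?addr_gt0 //.
rewrite ler_ln ?posrE ?mulr_gt0 ?addr_gt0 //; nra.
Qed.

(* At fixed product, the change of ln ((x + w) (y + w)) is controlled by the
   change of x + y alone; the common summand [w] only damps it. *)
Lemma ln_shift_same_product_le x y x' y' w :
  0 < x -> 0 < y -> 0 < x' -> 0 < y' -> 0 < w -> x' * y' = x * y ->
  ln (x' + w) - ln (x + w) + (ln (y' + w) - ln (y + w)) <=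
  Num.max 0 ((x' + y') / (x + y) - 1).
Proof.
move=> x0 y0 x'0 y'0 w0 e.
have -> : ln (x' + w) - ln (x + w) + (ln (y' + w) - ln (y + w)) =
    ln (((x' + w) * (y' + w)) / ((x + w) * (y + w))).
  rewrite ln_div ?posrE ?mulr_gt0 ?addr_gt0 // !lnM ?posrE ?addr_gt0 //; lra.
set den := (x + w) * (y + w).
have den0 : 0 < den by rewrite mulr_gt0 ?addr_gt0.
have q0 : 0 < ((x' + w) * (y' + w)) / den by rewrite divr_gt0 ?mulr_gt0 ?addr_gt0.
apply: le_trans (ln_le_subr1 q0) _.
have -> : (x' + w) * (y' + w) / den - 1 = w * (x' + y' - x - y) / den.
  have E : (x' + w) * (y' + w) - den = w * (x' + y' - x - y) by rewrite /den; nra.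
  rewrite -E; field; exact: lt0r_neq0.
have [d0|d0] := leP (x' + y' - x - y) 0.
  rewrite le_max; apply/orP; left; apply: mulr_le0_ge0; last by rewrite invr_ge0 ltW.
  by apply: mulr_ge0_le0 => //; rewrite ltW.
rewrite le_max; apply/orP; right.
have -> : (x' + y') / (x + y) - 1 = (x' + y' - x - y) / (x + y).
  field; apply: lt0r_neq0; exact: addr_gt0.
rewrite -subr_ge0.
have -> : (x' + y' - x - y) / (x + y) - w * (x' + y' - x - y) / den =
  (x' + y' - x - y) * (x * y + w * w) / ((x + y) * den).
  rewrite /den; field; apply/and3P; split; apply: lt0r_neq0; exact: addr_gt0.
apply: divr_ge0; last by rewrite ltW // mulr_gt0 ?addr_gt0.
by apply: mulr_ge0; [rewrite ltW | rewrite addr_ge0 ?mulr_ge0 // ltW].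
Qed.

Lemma shift_ratio_le x y mu : 0 < x -> 0 < y -> 1 < mu -> x <= mu * y ->
  Num.max 0 ((mu * x + y / mu) / (x + y) - 1) <= (mu - 1) * ln mu.
Proof.
move=> x0 y0 mu1 xy; have mu0 : 0 < mu by apply: lt_trans mu1.
apply: le_trans (_ : (mu - 1) * (1 - mu^-1) <= _); last first.
  by apply: ler_wpM2l; [rewrite subr_ge0 ltW | exact: ln_ge1BV].
have u1 : mu^-1 < 1 by rewrite invf_lt1.
rewrite ge_max; apply/andP; split; first nra.
rewrite lerBlDr ler_pdivrMr ?addr_gt0 //.
set u := mu^-1; have muu : mu * u = 1 by rewrite /u mulfV // gt_eqF.
have u0 : 0 < u by rewrite /u invr_gt0.
have -> : y / mu = u * y by rewrite /u mulrC.
have h1 : 0 <= (mu * y - x) * (1 - u) by apply: mulr_ge0; rewrite subr_ge0 // ltW.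
have h2 : mu * u * y = y by rewrite muu mul1r.
have h3 : mu * u * x = x by rewrite muu mul1r.
nra.
Qed.

End LnInequalities.

Section PairSums.
Variables (R : comRingType) (T : finType).

Lemma sum_offdiag_sym (f : T -> T -> R) : (forall x y, f x y = f y x) ->
  \sum_x \sum_y (if x == y then 0 else f x y) =
  (\sum_x \sum_(y | (enum_rank x < enum_rank y)%N) f x y) *+ 2.
Proof.
move=> fC.
have split_row x : \sum_y (if x == y then 0 else f x y) =
  \sum_(y | (enum_rank x < enum_rank y)%N) f x y +
  \sum_(y | (enum_rank y < enum_rank x)%N) f x y.
  rewrite !(big_mkcond (fun y => (_ < _)%N)) -big_split /=.
  apply: eq_bigr => y _.
  case: (ltngtP (enum_rank x) (enum_rank y)) => H.
  - by rewrite ifF ?addr0 //; apply/eqP => exy; move: H; rewrite exy ltnn.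
  - by rewrite ifF ?add0r //; apply/eqP => exy; move: H; rewrite exy ltnn.
  - by rewrite (enum_rank_inj (val_inj H)) eqxx addr0.
rewrite (eq_bigr _ (fun x _ => split_row x)) big_split /=.
rewrite [X in _ + X](exchange_big_dep xpredT) //= mulr2n; congr (_ + _).
by apply: eq_bigr => y _; apply: eq_bigr => x _; rewrite fC.
Qed.

Lemma sum_sym_two_rows (f : T -> T -> R) a b : a != b ->
  (forall x, f x x = 0) -> (forall x y, f x y = f y x) ->
  (forall x y, x != a -> x != b -> y != a -> y != b -> f x y = 0) ->
  \sum_x \sum_y f x y =
  (f a b + \sum_(z | (z != a) && (z != b)) (f a z + f b z)) *+ 2.
Proof.
move=> ab f0 fC fz.
have row x : \sum_y f x y = f x a + f x b + \sum_(z | (z != a) && (z != b)) f x z.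
  rewrite (bigD1 a) //= (bigD1 b) 1?eq_sym //= addrA.
  by congr (_ + _); apply: eq_bigl => z; rewrite andbC.
rewrite (bigD1 a) //= [X in _ + X](bigD1 b) /=; last by rewrite eq_sym.
have -> : \sum_(i | (i != a) && (i != b)) \sum_y f i y =
          \sum_(i | (i != a) && (i != b)) (f a i + f b i).
  apply: eq_bigr => x /andP[xa xb]; rewrite row big1 ?addr0 ?(fC x a) ?(fC x b) //.
  by move=> z /andP[za zb]; apply: fz.
rewrite !row f0 fC f0 !big_split /=; ring.
Qed.

End PairSums.

Section Chain.
Variables (R : realDomainType) (F G : nat -> R) (N : nat).
Hypotheses (F_step : forall k, (k.+1 < N)%N -> F k.+1 <= F k)
  (G_step : forall k, (k.+1 < N)%N -> G k.+1 <= G k)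
  (G_step_eq : forall k, (k.+1 < N)%N -> G k = G k.+1 -> F k = F k.+1)
  (G_step_lt : forall k, (k.+1 < N)%N -> G k.+1 < G k -> F k = F k.+1 -> F k = 0).

Lemma chain_from i d : (i + d < N)%N ->
  [/\ F (i + d)%N <= F i, G (i + d)%N <= G i,
      G (i + d)%N = G i -> F (i + d)%N = F i &
      F (i + d)%N = F i -> G (i + d)%N < G i -> F i = 0].
Proof.
elim: d => [|d IH] h; first by rewrite addn0; split=> // _; rewrite ltxx.
rewrite addnS in h *.
have [Fle Gle Geq Glt] := IH (ltn_trans (ltnSn _) h).
have Fs := F_step h; have Gs := G_step h.
split; [exact: le_trans Fs Fle | exact: le_trans Gs Gle | |].
- move=> e; have e1 : G (i + d)%N = G i by apply/eqP; rewrite eq_le Gle -e Gs.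
  by rewrite -Geq // -G_step_eq // e1 e.
- move=> e lt; have e1 : F (i + d)%N = F i by apply/eqP; rewrite eq_le Fle -e Fs.
  have [lt2|ge2] := ltP (G (i + d)%N) (G i); first exact: Glt.
  have e2 : G (i + d)%N = G i by apply/eqP; rewrite eq_le Gle ge2.
  by rewrite -e1; apply: G_step_lt; rewrite ?e2 ?e1.
Qed.

Lemma chain_compare i j : (i < N)%N -> (j < N)%N ->
  (F j < F i -> G j < G i) /\ (G j < G i -> F j < F i \/ (F i = 0 /\ F j = 0)).
Proof.
move=> iN jN; case: (leqP j i) => ji.
  have hd : (j + (i - j) < N)%N by rewrite subnKC.
  have [Fle Gle _ _] := chain_from hd.
  rewrite subnKC // in Fle Gle.
  by split=> h; [move: (lt_le_trans h Fle) | move: (lt_le_trans h Gle)]; rewrite ltxx.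
have hd : (i + (j - i) < N)%N by rewrite subnKC // ltnW.
have [Fle Gle Geq Glt] := chain_from hd.
rewrite subnKC ?(ltnW ji) // in Fle Gle Geq Glt.
split=> h.
  rewrite lt_neqAle Gle andbT; apply/negP => /eqP e.
  by move: h; rewrite Geq // ltxx.
have [lt|ge] := ltP (F j) (F i); first by left.
have e : F j = F i by apply/eqP; rewrite eq_le Fle ge.
by right; split; rewrite ?e Glt.
Qed.

End Chain.

Definition succ_in (T : finType) (rk : T -> 'I_#|T|) (a a' : T) : Prop :=
  nat_of_ord (rk a') = (rk a).+1.

Lemma succ_in_neq (T : finType) (rk : T -> 'I_#|T|) a a' : succ_in rk a a' -> a != a'.
Proof. by move=> ha; apply/eqP => e; move: ha; rewrite e; apply: n_Sn. Qed.

Lemma succ_in_card (T : finType) (rk : T -> 'I_#|T|) a a' :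
  succ_in rk a a' -> (1 < #|T|)%N.
Proof. by move=> ha; have := ltn_ord (rk a'); rewrite ha; apply: leq_trans. Qed.

Lemma ranked_compare (R : realDomainType) (T : finType) (rk : T -> 'I_#|T|)
    (F G : T -> R) : injective rk ->
  (forall a a', succ_in rk a a' -> F a' <= F a) ->
  (forall a a', succ_in rk a a' -> G a' <= G a) ->
  (forall a a', succ_in rk a a' -> G a = G a' -> F a = F a') ->
  (forall a a', succ_in rk a a' -> G a' < G a -> F a = F a' -> F a = 0) ->
  forall x y, (F y < F x -> G y < G x) /\
              (G y < G x -> F y < F x \/ (F x = 0 /\ F y = 0)).
Proof.
move=> rk_inj Fs Gs Geq Glt x y.
have [unrk rkK rkK'] : bijective rk by apply: inj_card_bij; rewrite ?card_ord.
pose elt k := unrk (insubd (rk x) k).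
have eltK z : elt (rk z) = z by rewrite /elt valKd rkK.
have succ_elt k : (k.+1 < #|T|)%N -> succ_in rk (elt k) (elt k.+1).
  by move=> hk; rewrite /succ_in /elt !rkK' !val_insubd hk ltnW.
have := chain_compare (F := F \o elt) (G := G \o elt) (N := #|T|).
move=> /(_ _ _ _ _ (rk x) (rk y) (ltn_ord _) (ltn_ord _)); rewrite /= !eltK.
by apply=> k /succ_elt; [apply: Fs | apply: Gs | apply: Geq | apply: Glt].
Qed.

Section Loglik.
Variables (R : realType) (A : finType) (v : A -> A -> R).
Implicit Types (p q : A -> R) (mu : R) (a b x y z : A).

Definition pair_loglik p x y :=
  v x y * ln (p x) + v y x * ln (p y) - turnout v x y * ln (p x + p y).

Definition loglik p := \sum_x \sum_y (if x == y then 0 else pair_loglik p x y).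

Lemma pair_loglikC p x y : pair_loglik p x y = pair_loglik p y x.
Proof. by rewrite /pair_loglik /turnout (addrC (p x)) (addrC (v x y)); lra. Qed.

Lemma Fz_expR p : (forall x, 0 < p x) -> Fz v p = expR (loglik p / 2).
Proof.
move=> p_gt0.
have -> : loglik p / 2 =
    \sum_x \sum_(y | (enum_rank x < enum_rank y)%N) pair_loglik p x y.
  by rewrite /loglik sum_offdiag_sym; [field | exact: pair_loglikC].
rewrite /Fz (big_morph expR (@expRD R) (@expR0 R)).
apply: eq_bigr => x _; rewrite (big_morph expR (@expRD R) (@expR0 R)).
apply: eq_bigr => y _.
rewrite /powR !gt_eqF ?addr_gt0 // -expRN -!expRD /pair_loglik /turnout.
congr expR; lra.
Qed.

Lemma Fz_le p q : (forall x, 0 < p x) -> (forall x, 0 < q x) ->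
  loglik p <= loglik q -> Fz v p <= Fz v q.
Proof. by move=> p_gt0 q_gt0 le; rewrite !Fz_expR // ler_expR ler_pM2r. Qed.

Lemma loglik_scale p c : 0 < c -> (forall x, 0 < p x) ->
  loglik (fun x => c * p x) = loglik p.
Proof.
move=> c0 p_gt0; apply: eq_bigr => x _; apply: eq_bigr => y _.
case: eqP => // _; rewrite /pair_loglik -mulrDr !lnM ?posrE ?addr_gt0 //.
rewrite /turnout; lra.
Qed.

Lemma loglik_le0 p : llull v -> (forall x, 0 < p x) -> loglik p <= 0.
Proof.
move=> hv p_gt0; apply: sumr_le0 => x _; apply: sumr_le0 => y _.
case: eqP => // /eqP xy; have [vxy _] := hv x y xy.
have [vyx _] := hv y x (contra_neq esym xy).
have lx : ln (p x) <= ln (p x + p y) by rewrite ler_ln ?posrE ?addr_gt0 // lerDl ltW.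
have ly : ln (p y) <= ln (p x + p y) by rewrite ler_ln ?posrE ?addr_gt0 // lerDr ltW.
rewrite /pair_loglik /turnout; nra.
Qed.

Lemma loglik_sub2 p q a b : a != b ->
  (forall x, x != a -> x != b -> q x = p x) ->
  loglik q - loglik p =
  (pair_loglik q a b - pair_loglik p a b +
   \sum_(z | (z != a) && (z != b))
     (pair_loglik q a z - pair_loglik p a z +
      (pair_loglik q b z - pair_loglik p b z))) *+ 2.
Proof.
move=> ab qp; rewrite /loglik -sumrB.
under eq_bigr do rewrite -sumrB.
rewrite (sum_sym_two_rows ab).
- rewrite (negbTE ab); congr ((_ + _) *+ 2); apply: eq_bigr => z /andP[za zb].
  by rewrite eq_sym (negbTE za) eq_sym (negbTE zb).
- by move=> x; rewrite eqxx subrr.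
- by move=> x y; rewrite eq_sym; case: eqP => // _; rewrite !(pair_loglikC _ x y).
- move=> x y xa xb ya yb; case: eqP => _; first by rewrite subrr.
  by rewrite /pair_loglik !qp ?subrr.
Qed.

Lemma Phi_gt0 p : Phi p -> forall x, 0 < p x.
Proof. by case. Qed.

Definition swap_coords a b p := fun x => p (tperm a b x).

Lemma Phi_swap a b p : Phi p -> Phi (swap_coords a b p).
Proof.
move=> [p_gt0 p1]; split=> [x|]; first exact: p_gt0.
rewrite -p1 /swap_coords (reindex_inj (@perm_inj _ (tperm a b))) /=.
by apply: eq_bigr => x _; rewrite tpermK.
Qed.

Lemma pair_loglik_swap p a b : a != b ->
  pair_loglik (swap_coords a b p) a b - pair_loglik p a b =
  margin v a b * (ln (p b) - ln (p a)).
Proof.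
move=> ab; rewrite /pair_loglik /swap_coords tpermL tpermR /turnout /margin.
rewrite (addrC (p b)); ring.
Qed.

Lemma pair_loglik_swap_other p a b z : z != a -> z != b ->
  pair_loglik (swap_coords a b p) a z - pair_loglik p a z +
  (pair_loglik (swap_coords a b p) b z - pair_loglik p b z) =
  (v a z - v b z) * (ln (p b) - ln (p a)) -
  (turnout v a z - turnout v b z) * (ln (p b + p z) - ln (p a + p z)).
Proof.
move=> za zb; rewrite /pair_loglik /swap_coords tpermL tpermR tpermD 1?eq_sym //.
rewrite /turnout; ring.
Qed.

Definition shift_coords a b (mu : R) p :=
  fun x => if x == a then mu * p a else if x == b then p b / mu else p x.

Lemma shift_coords_gt0 a b mu p : 0 < mu -> (forall x, 0 < p x) ->
  forall x, 0 < shift_coords a b mu p x.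
Proof.
move=> mu0 p_gt0 x; rewrite /shift_coords.
by case: ifP => _; [rewrite mulr_gt0 | case: ifP => _; rewrite ?divr_gt0].
Qed.

Lemma pair_loglik_shift a b mu p : a != b -> 0 < mu -> (forall x, 0 < p x) ->
  pair_loglik (shift_coords a b mu p) a b - pair_loglik p a b =
  margin v a b * ln mu -
  turnout v a b * (ln (mu * p a + p b / mu) - ln (p a + p b)).
Proof.
move=> ab mu0 p_gt0; rewrite /pair_loglik /shift_coords eqxx eq_sym (negbTE ab).
rewrite eqxx lnM ?posrE // ln_div ?posrE // /margin; ring.
Qed.

Lemma pair_loglik_shift_other a b mu p z : a != b -> 0 < mu ->
  (forall x, 0 < p x) -> z != a -> z != b ->
  pair_loglik (shift_coords a b mu p) a z - pair_loglik p a z +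
  (pair_loglik (shift_coords a b mu p) b z - pair_loglik p b z) =
  (v a z - v b z) * ln mu
  - turnout v a z * (ln (mu * p a + p z) - ln (p a + p z))
  - turnout v b z * (ln (p b / mu + p z) - ln (p b + p z)).
Proof.
move=> ab mu0 p_gt0 za zb; rewrite /pair_loglik /shift_coords (eq_sym b a).
rewrite (negbTE ab) (negbTE za) (negbTE zb) !eqxx lnM ?posrE // ln_div ?posrE //.
ring.
Qed.

Definition normalize p := fun x => (\sum_y p y)^-1 * p x.

Lemma sum_gt0 p a : (forall x, 0 < p x) -> 0 < \sum_y p y.
Proof.
move=> p_gt0; rewrite (bigD1 a) //= ltr_wpDr ?p_gt0 //.
by apply: sumr_ge0 => y _; apply: ltW.
Qed.

Lemma Phi_normalize p a : (forall x, 0 < p x) -> Phi (normalize p).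
Proof.
move=> p_gt0; have s0 := sum_gt0 a p_gt0; split=> [x|].
  by rewrite /normalize mulr_gt0 ?invr_gt0.
by rewrite /normalize -mulr_sumr mulVf // gt_eqF.
Qed.

Lemma loglik_normalize p a : (forall x, 0 < p x) ->
  loglik (normalize p) = loglik p.
Proof. by move=> p_gt0; rewrite loglik_scale // invr_gt0 (sum_gt0 a). Qed.

Lemma normalize_shift_ratio a b mu p : a != b -> 0 < mu ->
  (forall x, 0 < p x) ->
  normalize (shift_coords a b mu p) a * p b =
  mu ^+ 2 * (p a * normalize (shift_coords a b mu p) b).
Proof.
move=> ab mu0 p_gt0; have := sum_gt0 a (shift_coords_gt0 a b mu0 p_gt0).
rewrite /normalize /shift_coords eqxx eq_sym (negbTE ab) eqxx => s0.
by field; rewrite !gt_eqF.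
Qed.

Section Maximizing.
Hypotheses (hv : llull v) (hA : (0 < #|A|)%N).
Local Notation Fz_values := [set Fz v p | p in @Phi R A].

Lemma has_sup_Fz : has_sup Fz_values.
Proof.
split.
  exists (Fz v (fun=> #|A|%:R^-1)), (fun=> #|A|%:R^-1) => //.
  split=> [x|]; first by rewrite invr_gt0 ltr0n.
  have nA0 : #|A|%:R != 0 :> R by rewrite pnatr_eq0 -lt0n.
  by rewrite sumr_const -[RHS](mulVf nA0) mulr_natr.
exists 1 => _ [p hp <-].
rewrite Fz_expR; last exact: Phi_gt0.
rewrite -[X in _ <= X]expR0 ler_expR pmulr_lle0 ?loglik_le0 //; last exact: Phi_gt0.
Qed.

Lemma Fz_le_sup p : Phi p -> Fz v p <= sup Fz_values.
Proof. by move=> hp; apply: sup_upper_bound; [exact: has_sup_Fz | exists p]. Qed.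

Lemma maximizing_seq_exists : exists phis, maximizing_seq v phis.
Proof.
have near_sup n : exists p, Phi p /\ sup Fz_values - n.+1%:R^-1 < Fz v p.
  have [_ [p hp <-] lt] := sup_adherent (@harmonic_gt0 R n) has_sup_Fz.
  by exists p.
have [phis hphis] := choice near_sup.
exists phis; split=> [n|]; first by case: (hphis n).
apply: (@squeeze_cvgr _ _ _ R (fun n => sup Fz_values - n.+1%:R^-1) (fun=> sup Fz_values)).
- by apply: nearW => n; have [hp lt] := hphis n; rewrite (ltW lt) Fz_le_sup.
- by rewrite -[X in _ --> X]subr0; apply: cvgB; [exact: cvg_cst | exact: cvg_harmonic].
- exact: (@cvg_cst R^o _ nat \oo _).
Qed.

Lemma maximizing_seq_le phis qs : maximizing_seq v phis ->
  (forall n, Phi (qs n)) -> (forall n, Fz v (phis n) <= Fz v (qs n)) ->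
  maximizing_seq v qs.
Proof.
move=> [_ cvg_phis] hq le; split=> //.
apply: (squeeze_cvgr _ cvg_phis (@cvg_cst R^o _ nat \oo _)).
by apply: nearW => n; rewrite le Fz_le_sup.
Qed.

Lemma strengths_ge0 phi x : strengths v phi -> 0 <= phi x.
Proof.
move=> hs; have [phis hm] := maximizing_seq_exists.
apply: (@cvgr_to_ge _ _ eventually_filter R _ _ 0 (hs phis hm x)).
by apply: nearW => n; apply/ltW/(Phi_gt0 (proj1 hm n)).
Qed.

End Maximizing.

Lemma maximizing_seq_tail phis N : maximizing_seq v phis ->
  maximizing_seq v (fun n => phis (n + N)%N).
Proof.
move=> [hp hc]; split=> [n|]; first exact: hp.
by rewrite -(@cvg_shiftn N R^o (fun n => Fz v (phis n))) in hc.
Qed.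

End Loglik.

Section Consecutive.
Variables (R : realType) (A : finType) (v : A -> A -> R).
Variables (rk : A -> 'I_#|A|) (a a' : A).
Hypotheses (hv : llull v) (hc : clc_order v rk) (ha : succ_in rk a a').
Implicit Types (p : A -> R) (mu : R) (z : A).

Let aa' : a != a' := succ_in_neq ha.
Let hA : (0 < #|A|)%N := ltnW (succ_in_card ha).

Lemma margin_succ_ge0 : 0 <= margin v a a'.
Proof. by have [_ [vle _]] := hc; rewrite subr_ge0 vle // ha. Qed.

Lemma turnout_succ z : z != a -> z != a' ->
  0 <= turnout v a z - turnout v a' z /\
  turnout v a z - turnout v a' z <= margin v a a'.
Proof. by have [_ [_ [_ [_ tle]]]] := hc; apply: tle. Qed.

Lemma succ_dominates z : z != a -> z != a' -> v a' z <= v a z /\ v z a <= v z a'.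
Proof.
move=> za za'; have [rk_inj [_ [vmax [vmin _]]]] := hc.
have aa'_lt : (rk a < rk a')%N by rewrite ha.
case: (ltngtP (rk z) (rk a)) => H.
- by rewrite (vmin z a a') // (vmax z a a') // ge_min le_max !lexx orbT.
- have a'z : (rk a' < rk z)%N.
    rewrite ltn_neqAle ha H andbT; apply: contra za' => /eqP e.
    by apply/eqP/rk_inj/val_inj; rewrite /= -e ha.
  by rewrite (vmax a a' z) // (vmin a a' z) // ge_min le_max !lexx orbT.
- by rewrite (rk_inj _ _ (val_inj H)) eqxx in za.
Qed.

Lemma rho_succ_sub : rho v a - rho v a' = (#|A|.-1%:R)^-1 *
  (margin v a a' + \sum_(z | (z != a) && (z != a')) (v a z - v a' z)).
Proof.
rewrite /rho -mulrBr; congr (_ * _).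
rewrite (bigD1 a') 1?eq_sym //= [X in _ - X](bigD1 a) //= sumrB.
rewrite [X in _ - (_ + X)](eq_bigl (fun z => (z != a) && (z != a'))) => [|z].
  by rewrite /margin; ring.
by rewrite andbC.
Qed.

Lemma card_pred_gt0 : 0 < (#|A|.-1%:R : R).
Proof. by rewrite ltr0n; case: #|A| (succ_in_card ha) => [|[|n]]. Qed.

Lemma rho_succ_le : rho v a' <= rho v a.
Proof.
rewrite -subr_ge0 rho_succ_sub; apply: mulr_ge0.
  by rewrite invr_ge0 ltW ?card_pred_gt0.
apply: addr_ge0; first exact: margin_succ_ge0.
by apply: sumr_ge0 => z /andP[za za']; rewrite subr_ge0; case: (succ_dominates za za').
Qed.

Lemma rho_succ_eq : rho v a = rho v a' ->
  v a a' = v a' a /\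
  (forall z, z != a -> z != a' -> v a z = v a' z /\ v z a = v z a').
Proof.
move=> e; have : rho v a - rho v a' = 0 by rewrite e subrr.
rewrite rho_succ_sub => /eqP; rewrite mulf_eq0 invr_eq0 gt_eqF ?card_pred_gt0 //=.
have m0 := margin_succ_ge0.
have d_ge0 z : (z != a) && (z != a') -> 0 <= v a z - v a' z.
  by move=> /andP[za za']; rewrite subr_ge0; case: (succ_dominates za za').
have s0 : 0 <= \sum_(z | (z != a) && (z != a')) (v a z - v a' z) :=
  sumr_ge0 _ d_ge0.
move=> /eqP H; have m_eq0 : margin v a a' = 0 by lra.
have /psumr_eq0P d_eq0 : \sum_(z | (z != a) && (z != a')) (v a z - v a' z) = 0.
  by lra.
split; first by move: m_eq0; rewrite /margin; lra.
move=> z za za'; have := d_eq0 d_ge0 z; rewrite za za' => /(_ isT) dz.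
have [lo hi] := turnout_succ za za'.
move: lo hi; rewrite m_eq0 /turnout; lra.
Qed.

Definition shift_gain :=
  margin v a a' + \sum_(z | (z != a) && (z != a')) (v z a' - v z a).

Lemma shift_gain_gt0 : rho v a' < rho v a -> 0 < shift_gain.
Proof.
move=> lt; have m0 := margin_succ_ge0.
have col_ge0 z : (z != a) && (z != a') -> 0 <= v z a' - v z a.
  by move=> /andP[za za']; rewrite subr_ge0; case: (succ_dominates za za').
have s0 : 0 <= \sum_(z | (z != a) && (z != a')) (v z a' - v z a) :=
  sumr_ge0 _ col_ge0.
have [mp|m_le0] := ltP 0 (margin v a a'); first by rewrite /shift_gain; lra.
have m_eq0 : margin v a a' = 0 by lra.
have -> : shift_gain = \sum_(z | (z != a) && (z != a')) (v a z - v a' z).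
  rewrite /shift_gain m_eq0 add0r; apply: eq_bigr => z /andP[za za'].
  have [lo hi] := turnout_succ za za'.
  by move: lo hi; rewrite m_eq0 /turnout; lra.
move: lt; rewrite -subr_gt0 rho_succ_sub m_eq0 add0r pmulr_rgt0 // invr_gt0.
exact: card_pred_gt0.
Qed.

Lemma loglik_swap_ge p : (forall x, 0 < p x) -> p a < p a' ->
  loglik v p <= loglik v (swap_coords a a' p).
Proof.
move=> p_gt0 lt; rewrite -subr_ge0 (loglik_sub2 _ aa'); last first.
  by move=> x xa xa'; rewrite /swap_coords tpermD // eq_sym.
have L0 : 0 <= ln (p a') - ln (p a) by rewrite subr_ge0 ler_ln ?posrE // ltW.
rewrite mulrn_wge0 // addr_ge0 ?pair_loglik_swap ?mulr_ge0 ?margin_succ_ge0 //.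
apply: sumr_ge0 => z /andP[za za']; rewrite pair_loglik_swap_other //.
have [f1 f2] := succ_dominates za za'.
have /andP[D0 DL] := ln_shift_bounds (p_gt0 a) (ltW lt) (p_gt0 z).
move: D0 DL; rewrite /turnout.
set L := ln (p a') - ln (p a); set D := ln (p a' + p z) - ln (p a + p z).
move=> D0 DL; nra.
Qed.

Lemma loglik_swap_eq p : v a a' = v a' a ->
  (forall z, z != a -> z != a' -> v a z = v a' z /\ v z a = v z a') ->
  loglik v (swap_coords a a' p) = loglik v p.
Proof.
move=> e1 e2; apply/eqP; rewrite -subr_eq0 (loglik_sub2 _ aa'); last first.
  by move=> x xa xa'; rewrite /swap_coords tpermD // eq_sym.
have m0 : margin v a a' = 0 by rewrite /margin e1 subrr.
rewrite pair_loglik_swap // m0 mul0r add0r big1 ?mul0rn //.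
move=> z /andP[za za']; rewrite pair_loglik_swap_other //.
by rewrite /turnout; have [-> ->] := e2 z za za'; ring.
Qed.

Definition shift_excess mu p :=
  Num.max 0 ((mu * p a + p a' / mu) / (p a + p a') - 1).

Lemma shift_excess_ge0 mu p : 0 <= shift_excess mu p.
Proof. by rewrite /shift_excess le_max lexx. Qed.

Lemma pair_loglik_shift_ge mu p : 0 < mu -> (forall x, 0 < p x) ->
  margin v a a' * ln mu - shift_excess mu p <=
  pair_loglik v (shift_coords a a' mu p) a a' - pair_loglik v p a a'.
Proof.
move=> mu0 p_gt0; rewrite pair_loglik_shift //.
have := ln_ratio_le (addr_gt0 (p_gt0 a) (p_gt0 a'))
  (addr_gt0 (mulr_gt0 mu0 (p_gt0 a)) (divr_gt0 (p_gt0 a') mu0)).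
have [t0 [_ t1]] := hv aa'; have [t2 _] := hv (contra_neq esym aa').
move: (shift_excess_ge0 mu p); rewrite -/(shift_excess mu p) /turnout.
set Y := ln _ - ln _; set X := shift_excess mu p => X0 Y_le; nra.
Qed.

Lemma pair_loglik_shift_other_ge mu p z : 1 <= mu -> (forall x, 0 < p x) ->
  z != a -> z != a' ->
  (v z a' - v z a) * ln mu - shift_excess mu p <=
  pair_loglik v (shift_coords a a' mu p) a z - pair_loglik v p a z +
  (pair_loglik v (shift_coords a a' mu p) a' z - pair_loglik v p a' z).
Proof.
move=> mu1 p_gt0 za za'; have mu0 : 0 < mu by apply: lt_le_trans mu1.
rewrite pair_loglik_shift_other //.
have pa_le : p a <= mu * p a by rewrite ler_peMl // ltW.
have /andP[A1_ge0] := ln_shift_bounds (p_gt0 a) pa_le (p_gt0 z).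
rewrite lnM ?posrE // addrK => A1_le.
have eprod : mu * p a * (p a' / mu) = p a * p a' by field; rewrite gt_eqF.
have := ln_shift_same_product_le (p_gt0 a) (p_gt0 a') (mulr_gt0 mu0 (p_gt0 a))
  (divr_gt0 (p_gt0 a') mu0) (p_gt0 z) eprod.
rewrite -/(shift_excess mu p) => AP.
have [t_lo _] := turnout_succ za za'.
have [t0 [_ t1]] := hv (contra_neq esym za'); have [t2 _] := hv za'.
move: t_lo A1_ge0 A1_le AP (shift_excess_ge0 mu p); rewrite /turnout.
set A1 := ln (mu * p a + p z) - _; set A2 := ln (p a' / mu + p z) - _.
set X := shift_excess mu p => t_lo A1_ge0 A1_le AP X0; nra.
Qed.

(* Small enough that the second-order loss [shift_excess], incurred at most
   #|A| + 1 times, stays below the first-order gain [shift_gain * ln mu]. *)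
Definition shift_factor := 1 + shift_gain / #|A|.+1%:R.

Lemma shift_factor_gt1 : 0 < shift_gain -> 1 < shift_factor.
Proof. by move=> g0; rewrite /shift_factor ltrDl divr_gt0 ?ltr0n. Qed.

Lemma loglik_shift_ge p : (forall x, 0 < p x) -> 0 < shift_gain ->
  p a <= shift_factor * p a' ->
  loglik v p <= loglik v (shift_coords a a' shift_factor p).
Proof.
move=> p_gt0 g0 pa_le; set mu := shift_factor; set X := shift_excess mu p.
set C : R := #|A|.+1%:R; have C0 : 0 < C by rewrite ltr0n.
have mu1 : 1 < mu := shift_factor_gt1 g0.
have gainE : shift_gain = C * (mu - 1) by rewrite /mu /shift_factor; field; rewrite gt_eqF.
have CX_le : C * X <= shift_gain * ln mu.
  rewrite gainE -mulrA; apply: ler_wpM2l; [exact: ltW | exact: shift_ratio_le].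
have sumX : \sum_(z | (z != a) && (z != a')) X <= #|A|%:R * X.
  apply: le_trans (_ : \sum_z X <= _); last by rewrite sumr_const mulr_natl; apply: lexx.
  rewrite [X in _ <= X](bigID (fun z => (z != a) && (z != a'))) /= lerDl.
  by apply: sumr_ge0 => z _; apply: shift_excess_ge0.
have Hpair := pair_loglik_shift_ge (lt_trans ltr01 mu1) p_gt0.
have Hother : (shift_gain - margin v a a') * ln mu -
    \sum_(z | (z != a) && (z != a')) X <=
  \sum_(z | (z != a) && (z != a'))
    (pair_loglik v (shift_coords a a' mu p) a z - pair_loglik v p a z +
     (pair_loglik v (shift_coords a a' mu p) a' z - pair_loglik v p a' z)).
  apply: le_trans (ler_sum _ (fun z zP => pair_loglik_shift_other_ge
    (ltW mu1) p_gt0 (proj1 (andP zP)) (proj2 (andP zP)))).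
  by rewrite sumrB -mulr_suml /shift_gain addrAC subrr add0r.
rewrite -subr_ge0 (loglik_sub2 _ aa'); last first.
  by move=> x xa xa'; rewrite /shift_coords (negbTE xa) (negbTE xa').
rewrite -/X in Hpair Hother; rewrite mulrn_wge0 //.
have CE : C = #|A|%:R + 1 by rewrite /C -natr1.
rewrite CE in CX_le; nra.
Qed.

Lemma strengths_succ_ge phi : strengths v phi -> phi a' <= phi a.
Proof.
move=> hs; have [phis hm] := maximizing_seq_exists hv hA.
pose qs n := if phis n a < phis n a' then swap_coords a a' (phis n) else phis n.
have hq : maximizing_seq v qs.
  apply: (maximizing_seq_le hv hA hm) => n; rewrite /qs; case: ifP => lt.
  - exact/Phi_swap/(proj1 hm n).
  - exact: (proj1 hm n).
  - apply: Fz_le; [exact: Phi_gt0 (proj1 hm n) | exact: Phi_gt0 (Phi_swap _ _ (proj1 hm n)) |].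
    by apply: loglik_swap_ge lt; exact: Phi_gt0 (proj1 hm n).
  - exact: lexx.
rewrite -subr_ge0.
apply: (@cvgr_to_ge _ _ eventually_filter R (fun n => qs n a - qs n a')).
  exact (cvgB (hs qs hq a) (hs qs hq a')).
apply: nearW => n; rewrite subr_ge0 /qs; case: ifPn => [lt|].
  by rewrite /swap_coords tpermL tpermR ltW.
by rewrite -leNgt.
Qed.

Lemma strengths_succ_eq phi : strengths v phi -> rho v a = rho v a' ->
  phi a = phi a'.
Proof.
move=> hs /rho_succ_eq [e1 e2].
have [phis hm] := maximizing_seq_exists hv hA.
pose qs n := swap_coords a a' (phis n).
have hq : maximizing_seq v qs.
  apply: (maximizing_seq_le hv hA hm) => n; first exact/Phi_swap/(proj1 hm n).
  apply: Fz_le; [exact: Phi_gt0 (proj1 hm n) | exact: Phi_gt0 (Phi_swap _ _ (proj1 hm n)) |].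
  by rewrite (loglik_swap_eq _ e1 e2).
have qa : (fun n => qs n a) = (fun n => phis n a').
  by apply/funext => n; rewrite /qs /swap_coords tpermL.
have := hs qs hq a; rewrite qa => cvg_a.
exact: (cvg_unique (@norm_hausdorff _ R^o) cvg_a (hs phis hm a')).
Qed.

Lemma maximizing_seq_shift ps : 0 < shift_gain -> maximizing_seq v ps ->
  (forall n, ps n a <= shift_factor * ps n a') ->
  maximizing_seq v
    (fun n => normalize (shift_coords a a' shift_factor (ps n))).
Proof.
move=> g0 hps ps_le; set mu := shift_factor.
have mu0 : 0 < mu := lt_trans ltr01 (shift_factor_gt1 g0).
have ps_gt0 n := Phi_gt0 (proj1 hps n).
have sh_gt0 n := shift_coords_gt0 a a' mu0 (ps_gt0 n).
apply: (maximizing_seq_le hv hA hps) => n; first exact: Phi_normalize a (sh_gt0 n).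
apply: Fz_le; [exact: ps_gt0 | exact: Phi_gt0 (Phi_normalize a (sh_gt0 n)) |].
rewrite (loglik_normalize v a (sh_gt0 n)).
by apply: loglik_shift_ge => //; exact: ps_gt0.
Qed.

Lemma strengths_succ_eq0 phi : strengths v phi -> rho v a' < rho v a ->
  phi a = phi a' -> phi a = 0.
Proof.
move=> hs lt e; set mu := shift_factor.
have g0 := shift_gain_gt0 lt; have mu1 : 1 < mu := shift_factor_gt1 g0.
have [phis hm] := maximizing_seq_exists hv hA.
have := strengths_ge0 hv hA a hs; rewrite le_eqVlt => /orP[/eqP <- //|pa0].
have cvg_diff : (fun n => phis n a - mu * phis n a') @ \oo -->
    (phi a - mu * phi a' : R^o).
  by apply: cvgB; [exact: hs phis hm a | exact: cvgMl_tmp (hs phis hm a')].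
have neg : phi a - mu * phi a' < 0 by rewrite -e; nra.
have [N _ le_eventually] := cvgr_lt _ cvg_diff 0 neg.
pose ps n := phis (n + N)%N.
have hps : maximizing_seq v ps := maximizing_seq_tail N hm.
have ps_le n : ps n a <= mu * ps n a'.
  by have /ltW := le_eventually (n + N)%N (leq_addl _ _); rewrite subr_le0.
pose qs n := normalize (shift_coords a a' mu (ps n)).
have hqs : maximizing_seq v qs := maximizing_seq_shift g0 hps ps_le.
have lim1 : (fun n => qs n a * ps n a') @ \oo --> (phi a * phi a' : R^o).
  exact: cvgM (hs qs hqs a) (hs ps hps a').
have lim2 : (fun n => qs n a * ps n a') @ \oo -->
    (mu ^+ 2 * (phi a * phi a') : R^o).
  have -> : (fun n => qs n a * ps n a') = (fun n => mu ^+ 2 * (ps n a * qs n a')).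
    apply/funext => n; apply: normalize_shift_ratio aa' _ _.
      exact: lt_trans ltr01 mu1.
    exact: Phi_gt0 (proj1 hps n).
  exact: cvgMl_tmp (cvgM (hs ps hps a) (hs qs hqs a')).
have := cvg_unique (@norm_hausdorff _ R^o) lim1 lim2; rewrite -e => E.
have /eqP : (mu ^+ 2 - 1) * (phi a * phi a) = 0 by rewrite mulrBl mul1r -E subrr.
rewrite mulf_eq0 mulf_eq0 (gt_eqF pa0) !orbF subr_eq0 expr2 => /eqP; nra.
Qed.

End Consecutive.

Unset Implicit Arguments. Set Strict Implicit. Set Printing Implicit Defensive.

Theorem theorem3p5 (R : realType) (A : finType) (v : A -> A -> R)
  (phi : A -> R) :
  (2 <= #|A|)%N ->
  llull v -> has_CLC v -> nonvanishing v ->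
  strengths v phi ->
  forall x y : A,
    (phi y < phi x -> rho v y < rho v x) /\
    (rho v y < rho v x -> phi y < phi x \/ (phi x = 0 /\ phi y = 0)).
Proof.
move=> _ hv [rk hc] _ hs.
apply: (ranked_compare (proj1 hc)) => a a' ha.
- exact: strengths_succ_ge hv hc ha phi hs.
- exact: rho_succ_le hc ha.
- exact: strengths_succ_eq hv hc ha phi hs.
- exact: strengths_succ_eq0 hv hc ha phi hs.
Qed.
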